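(* Let $G$ be the $n\times n$ real matrix with entries $G_{ij}=\frac1p\,\sigma^{\,i+j}(x)$ for $0\le i,j\le n-1$ (exponents of $\sigma$ may be read modulo $n$, since $\sigma^n(x)=x$). Then $G$ is orthogonal: $GG^T=G^TG=I_n$.
   Context: Let $n>1$ be an odd integer and $p$ a prime with $p\equiv 1 \pmod n$. Let $\zeta_p=e^{2\pi i/p}$, let $r$ be a primitive root modulo $p$, and let $\sigma$ be the automorphism of $\mathbb{Q}(\zeta_p)$ with $\sigma(\zeta_p)=\zeta_p^r$. Let $\mathbb{K}=\{y\in\mathbb{Q}(\zeta_p):\sigma^n(y)=y\}$; it is a totally real field of degree $n$, contained in $\mathbb{R}$ via $\mathbb{Q}(\zeta_p)\subset\mathbb{C}$, and its embeddings into $\mathbb{R}$ are the restrictions of $\sigma^0,\dots,\sigma^{n-1}$. Let $\alpha=\prod_{j=0}^{(p-3)/2}(1-\zeta_p^{r^j})$, let $\lambda$ be an integer with $\lambda(r-1)\equiv1\pmod p$, let $z=\zeta_p^{\lambda}\alpha(1-\zeta_p)$, and let $x=\mathrm{Tr}_{\mathbb{Q}(\zeta_p)/\mathbb{K}}(z)=\sum_{j=1}^{(p-1)/n}\sigma^{jn}(z)\in\mathcal{O}_\mathbb{K}$. *)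

From HB Require Import structures.
From mathcomp Require Import all_boot all_order all_algebra all_field.
Set Implicit Arguments. Unset Strict Implicit. Unset Printing Implicit Defensive.
Import Order.TTheory GRing.Theory Num.Theory.
Local Open Scope ring_scope.

(* zeta_p = e^{2 pi i / p}.  In algC, p.-root (-1) is the p-th root of -1
   with minimal nonnegative argument, i.e. e^{i pi / p}; its square is
   e^{2 pi i / p}. *)
Definition zeta (p : nat) : algC := (p.-root (-1)) ^+ 2.

Definition alpha (p : nat) (r : int) : algC :=
  \prod_(0 <= j < ((p - 3)./2).+1) (1 - zeta p ^ (r ^+ j)).

Definition zz (p : nat) (r lam : int) : algC :=
  zeta p ^ lam * alpha p r * (1 - zeta p).

(* x = Tr_{Q(zeta)/K}(z) = sum_{j=1}^{(p-1)/n} sigma^{jn}(z) *)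
Definition xx (n p : nat) (r lam : int) (sigma : algC -> algC) : algC :=
  \sum_(1 <= j < ((p - 1) %/ n).+1) iter (j * n) sigma (zz p r lam).

Definition Gmat (n p : nat) (r lam : int) (sigma : algC -> algC) : 'M[algC]_n :=
  \matrix_(i < n, j < n) (iter (i + j) sigma (xx n p r lam sigma) / p%:R).

From HB Require Import structures.
From mathcomp Require Import all_boot all_order all_algebra all_field.
From mathcomp Require Import zify ring.
Set Implicit Arguments.
Unset Strict Implicit.
Unset Printing Implicit Defensive.
Import Order.TTheory GRing.Theory Num.Theory.
Local Open Scope ring_scope.

(* Write rho for r in F_p and w t := zeta^t for t in F_p, an additive character.
   The element beta := zeta^lam * alpha satisfies sigma beta = -beta, and
   beta^2 = (-1)^((p-1)/2) p because the product of the 1 - w t over t <> 0 is p.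
   Since z = beta (1 - zeta), the conjugates of x are sigma^c x = - beta * P_c,
   where P_c sums eta N := (-1)^N w (rho^N) over the residue class of c modulo n
   in Z/(p-1).  Orthogonality of the characters of F_p evaluates the correlations
   sum_N eta (u + N) eta (v + N) = +-([rho^u + rho^v = 0] p - 1), and assembling
   them over the classes gives sum_k P_(a+k) P_(b+k) = [a = b] (-1)^((p-1)/2) p.
   Hence G G^T = beta^2 / p^2 * (-1)^((p-1)/2) p = 1, and G is symmetric. *)

Section NatSums.
Variable R : nmodType.

Lemma sum_nat_periodic_shift (g : nat -> R) d c :
    (forall i, g (i + d)%N = g i) ->
  \sum_(0 <= i < d) g (i + c)%N = \sum_(0 <= i < d) g i.
Proof.
move=> g_per; elim: c => [|c IHc]; first by under eq_bigr do rewrite addn0.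
case: d g_per IHc => [|d] g_per IHc; first by rewrite !big_geq.
rewrite -IHc big_nat_recr // [RHS]big_ltn // add0n [RHS]addrC.
rewrite -addSnnS [(d.+1 + _)%N]addnC g_per big_add1.
by congr (_ + _); apply: eq_bigr => i _; rewrite addSnnS.
Qed.

Lemma sum_nat_mul_blocks (g : nat -> R) n f :
  \sum_(0 <= N < n * f) g N = \sum_(0 <= k < n) \sum_(0 <= j < f) g (k + j * n)%N.
Proof.
rewrite mulnC big_nat_mul exchange_big /=; apply: eq_bigr => j _.
by rewrite -{1}[(j * n)%N]add0n big_addn mulSn addnK; apply: eq_bigr => k _; rewrite addnC.
Qed.

End NatSums.

Lemma sumr_sign_double (R : pzRingType) k : \sum_(0 <= j < k.*2) (-1) ^+ j = 0 :> R.
Proof.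
elim: k => [|k IHk]; first by rewrite big_geq.
by rewrite doubleS !big_nat_recr //= IHk add0r exprS mulN1r addrN.
Qed.

Lemma prim_root_half (R : idomainType) m (x : R) :
  (m.*2).-primitive_root x -> x ^+ m = -1.
Proof.
move=> x_prim; have m_gt0 : (0 < m)%N by rewrite -double_gt0 (prim_order_gt0 x_prim).
have /eqP : (x ^+ m) ^+ 2 = 1 by rewrite -exprM muln2 (prim_expr_order x_prim).
rewrite sqrf_eq1 => /orP[|/eqP //].
by rewrite -(expr0 x) (eq_prim_root_expr x_prim) mod0n modn_small ?(gtn_eqF m_gt0) //
  -addnn -{1}[m]add0n ltn_add2r.
Qed.

Lemma big_nat_double T (idx : T) (op : Monoid.com_law idx) (F : nat -> T) m :
  \big[op/idx]_(0 <= i < m.*2) F i = \big[op/idx]_(0 <= i < m) op (F i) (F (i + m)%N).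
Proof.
rewrite -addnn (big_cat_nat _ (leq_addr m m)) //= big_split /=.
by rewrite -{2}[m]add0n big_addn addnK.
Qed.

Section NatModular.
Local Open Scope nat_scope.

Lemma eqn_mod_add_muln a b l h n : a < n -> b < n -> l < h.*2 ->
  (a == b + (l + h) * n %[mod h.*2 * n]) = (a == b) && (l == h).
Proof.
move=> a_lt_n b_lt_n l_lt_2h.
have small k : k < h.*2 -> b + k * n < h.*2 * n by move=> k_lt; nia.
have eq_small k : (a == b + k * n) = (a == b) && (k == 0).
  case: k => [|k]; first by rewrite mul0n addn0 andbT.
  by rewrite andbF; apply/negbTE; rewrite neq_ltn; apply/orP; left; nia.
rewrite [a %% _]modn_small; last by nia.
case: (ltnP l h) => [l_lt_h|h_le_l].
  have h_gt0 : 0 < h := leq_ltn_trans (leq0n l) l_lt_h.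
  rewrite modn_small; last by apply: small; rewrite -addnn ltn_add2r.
  by rewrite eq_small addn_eq0 (gtn_eqF h_gt0) (ltn_eqF l_lt_h) !andbF.
rewrite -{1}[l](subnK h_le_l) -addnA addnn mulnDl addnA modnDr modn_small; last first.
  by apply: small; lia.
by rewrite eq_small subn_eq0 (eqn_leq l h) h_le_l andbT.
Qed.

End NatModular.

Section IteratedRMorphism.
Variables (R : pzRingType) (f : {rmorphism R -> R}).

Definition iter_rmorph k : R -> R := iter k f.

Fact iter_rmorph_is_zmod_morphism k : zmod_morphism (iter_rmorph k).
Proof. by elim: k => // k IHk x y; rewrite /iter_rmorph /= -/(iter_rmorph k) IHk rmorphB. Qed.

Fact iter_rmorph_is_monoid_morphism k : monoid_morphism (iter_rmorph k).
Proof.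
elim: k => // k [IHk1 IHkM]; split=> [|x y]; rewrite /iter_rmorph /= -/(iter_rmorph k).
  by rewrite IHk1 rmorph1.
by rewrite IHkM rmorphM.
Qed.

HB.instance Definition _ k := GRing.isZmodMorphism.Build R R (iter_rmorph k)
  (iter_rmorph_is_zmod_morphism k).
HB.instance Definition _ k := GRing.isMonoidMorphism.Build R R (iter_rmorph k)
  (iter_rmorph_is_monoid_morphism k).

End IteratedRMorphism.

Section AdditiveCharacter.
Variables (R : fieldType) (p : nat) (z : R).
Hypotheses (p_pr : prime p) (z_prim : p.-primitive_root z).

Definition addchar (t : 'F_p) : R := z ^+ t.

Lemma addchar_nat k : addchar k%:R = z ^+ k.
Proof. by rewrite /addchar val_Fp_nat // (prim_expr_mod z_prim). Qed.

Lemma addchar0 : addchar 0 = 1.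
Proof. exact: expr0. Qed.

Lemma addcharD s t : addchar (s + t) = addchar s * addchar t.
Proof. by rewrite -[s]natr_Zp -[t]natr_Zp -natrD !addchar_nat exprD. Qed.

Lemma addcharN t : addchar (- t) * addchar t = 1.
Proof. by rewrite -addcharD addNr addchar0. Qed.

Lemma addcharN1 t : 1 - addchar (- t) = - addchar (- t) * (1 - addchar t).
Proof. by rewrite mulrBr mulr1 mulNr opprK addcharN addrC. Qed.

Lemma addcharXn t k : addchar t ^+ k = addchar (t *+ k).
Proof. by elim: k => [|k IHk]; rewrite ?addchar0 // exprS IHk mulrS addcharD. Qed.

Lemma exprz_addchar (a : int) : z ^ a = addchar a%:~R.
Proof.
have z_neq0 : z != 0 by rewrite (prim_root_eq0 z_prim) -lt0n prime_gt0.
have addcharV t : addchar (- t) = (addchar t)^-1.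
  have addchar_neq0 : addchar t != 0 by apply: expf_neq0.
  by rewrite -[LHS]mulr1 -(mulfV addchar_neq0) mulrA addcharN mul1r.
by case: a => k; rewrite ?NegzE ?rmorphN /= ?addcharV -pmulrn addchar_nat.
Qed.

Lemma addchar1 : addchar 1 = z.
Proof. exact: (addchar_nat 1). Qed.

Lemma addchar1_neq1 : addchar 1 != 1.
Proof.
rewrite addchar1 -(expr1 z) -(expr0 z) (eq_prim_root_expr z_prim).
by rewrite mod0n modn_small ?prime_gt1.
Qed.

Lemma big_addchar T (idx : T) (op : T -> T -> T) (g : R -> T) :
  \big[op/idx]_(t : 'F_p) g (addchar t) = \big[op/idx]_(0 <= i < p) g (z ^+ i).
Proof. by rewrite [in RHS](_ : p = (Zp_trunc (pdiv p)).+2) ?Fp_cast // big_mkord. Qed.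

Lemma sum_addchar s : \sum_(t : 'F_p) addchar (s * t) = (s == 0)%:R * p%:R.
Proof.
have [->|s_neq0] := eqVneq s 0.
  by under eq_bigr do rewrite mul0r addchar0; rewrite sumr_const card_Fp // mul1r.
rewrite mul0r (reindex_inj (mulfI (invr_neq0 s_neq0))) /=.
under eq_bigr do rewrite mulVKf //.
set S := \sum_t addchar t.
have : addchar 1 * S = S.
  by rewrite {2}/S (reindex_inj (addrI 1)) mulr_sumr; under [RHS]eq_bigr do rewrite addcharD.
move/eqP; rewrite -subr_eq0 -{2}[S]mul1r -mulrBl mulf_eq0 subr_eq0 (negbTE addchar1_neq1).
by move/eqP.
Qed.

Lemma sum_addchar_nonzero s :
  \sum_(t | t != 0) addchar (s * t) = (s == 0)%:R * p%:R - 1.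
Proof. by rewrite -sum_addchar [in RHS](bigD1 0) //= mulr0 addchar0 addrC addrK. Qed.

Lemma prod_1_addchar : \prod_(t | t != 0) (1 - addchar t) = p%:R.
Proof.
set P := \prod_(t | t != 0) ('X - (addchar t)%:P).
have XsubP : ('X - 1) * P = ('X - 1) * \sum_(i < p) 'X^i.
  rewrite -subrX1 -(factor_Xn_sub_1 z_prim) -(big_addchar _ _ (fun x : R => 'X - x%:P)).
  by rewrite [RHS](bigD1 0) //= addchar0.
have := congr1 (horner^~ 1) (mulfI (negbT (polyXsubC_eq0 1)) XsubP).
rewrite horner_prod horner_sum; under eq_bigr do rewrite hornerXsubC.
by under [in RHS]eq_bigr do rewrite hornerXn expr1n; rewrite sumr_const card_ord.
Qed.

End AdditiveCharacter.

Section PrimitiveRootOfFiniteField.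
Variables (F : finFieldType) (rho : F).
Hypothesis rho_prim : (#|F|.-1).-primitive_root rho.

Lemma big_prim_root_nonzero T (idx : T) (op : Monoid.com_law idx) (g : F -> T) :
  \big[op/idx]_(0 <= i < #|F|.-1) g (rho ^+ i) = \big[op/idx]_(t | t != 0) g t.
Proof.
have rho_neq0 : rho != 0.
  by rewrite (prim_root_eq0 rho_prim) -lt0n (prim_order_gt0 rho_prim).
have rho_inj : injective (fun i : 'I_#|F|.-1 => rho ^+ i).
  by move=> i j /eqP; rewrite (eq_prim_root_expr rho_prim) !modn_small // => /eqP/val_inj.
have im_rho : [set rho ^+ i | i : 'I_#|F|.-1] = [set~ 0].
  apply/eqP; rewrite eqEcard card_imset // card_ord cardsC1 leqnn andbT.
  by apply/subsetP => _ /imsetP[i _ ->]; rewrite !inE expf_neq0.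
rewrite (eq_bigl (mem [set~ 0])) => [|t]; last by rewrite !inE.
by rewrite -im_rho (big_imset _ (in2W rho_inj)) big_mkord.
Qed.

End PrimitiveRootOfFiniteField.

Lemma zeta_prim p : prime p -> p.-primitive_root (zeta p).
Proof.
move=> p_pr; have p_gt1 := prime_gt1 p_pr.
set y := p.-root (-1 : algC).
have yp : y ^+ p = -1 by rewrite rootCK // ltnW.
have zeta_neq1 : zeta p != 1.
  rewrite /zeta -/y sqrf_eq1 negb_or; apply/andP; split; apply/eqP => y_pm1.
    by move: yp; rewrite y_pm1 expr1n => /eqP; rewrite -addr_eq0 -mulr2n pnatr_eq0.
  by have := rootC_lt0 (-1 : algC) p_gt1; rewrite -/y y_pm1 ltrN10.
have zetap : zeta p ^+ p = 1 by rewrite -exprM mulnC exprM yp sqrrN expr1n.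
have [m zeta_m_prim m_dvd] := prim_order_exists (prime_gt0 p_pr) zetap.
case/primeP: p_pr => _ /(_ m m_dvd) /orP[/eqP m1|/eqP mp]; last by rewrite mp in zeta_m_prim.
move: (prim_expr_order zeta_m_prim); rewrite m1 expr1 => zeta1.
by rewrite zeta1 eqxx in zeta_neq1.
Qed.

Lemma intr_Fp_eq p (a b : int) : prime p -> (a = b %[mod p])%Z -> a%:~R = b%:~R :> 'F_p.
Proof.
move=> p_pr ab; rewrite (divz_eq a p) (divz_eq b p) ab !intrD !intrM.
by rewrite -[(p%:Z)%:~R]pmulrn (pchar_Fp_0 p_pr) !mulr0.
Qed.

Section GaussPeriodMatrix.
Variables (n p : nat) (r lam : int) (sigma : {rmorphism algC -> algC}).
Hypotheses (n_gt1 : (1 < n)%N) (n_odd : odd n) (p_pr : prime p)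
  (p_mod_n : (p = 1 %[mod n])%N)
  (r_prim : (p.-1).-primitive_root (r%:~R : 'F_p))
  (lam_r : (lam * (r - 1) = 1 %[mod p])%Z)
  (sigma_zeta : sigma (zeta p) = zeta p ^ r).

Local Notation f := ((p - 1) %/ n)%N.
Local Notation h := f./2.
Local Notation m := (n * h)%N.
Local Notation rho := (r%:~R : 'F_p).
Local Notation mu := (lam%:~R : 'F_p).
Local Notation w := (@addchar _ p (zeta p)).
Local Notation it := (iter_rmorph sigma).

Let zeta_p_prim := zeta_prim p_pr.
Let zeta_exprz := exprz_addchar p_pr zeta_p_prim.

Let rho_gen : (#|'F_p|.-1).-primitive_root rho.
Proof. by rewrite card_Fp. Qed.

Lemma predp_mul : p.-1 = (n * f)%N.
Proof. by rewrite -subn1 mulnC divnK // -eqn_mod_dvd ?prime_gt0 // p_mod_n. Qed.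

Lemma f_double : f = h.*2.
Proof.
have p_odd : odd p.
  have [p2|//] := even_prime p_pr; move: predp_mul; rewrite p2 => /esym/eqP.
  by rewrite muln_eq1 => /andP[/eqP n1 _]; move: n_gt1; rewrite n1.
have f_even : odd f = false.
  by move: (congr1 odd predp_mul); rewrite oddM n_odd -subn1 oddB ?prime_gt0 // p_odd.
by rewrite -{1}[f]odd_double_half f_even add0n.
Qed.

Lemma predp_double : p.-1 = m.*2.
Proof. by rewrite predp_mul {1}f_double doubleMr. Qed.

Lemma m_gt0 : (0 < m)%N.
Proof. by rewrite -double_gt0 -predp_double -subn1 subn_gt0 prime_gt1. Qed.

Lemma rho_half : rho ^+ m = -1.
Proof. by apply: prim_root_half; rewrite -predp_double. Qed.

Lemma mu_rho : mu * (rho - 1) = 1.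
Proof. by have := intr_Fp_eq p_pr lam_r; rewrite intrM intrB. Qed.

Lemma sum_rho : \sum_(0 <= j < m) rho ^+ j = - (mu *+ 2).
Proof.
transitivity (mu * ((rho - 1) * \sum_(0 <= j < m) rho ^+ j)).
  by rewrite mulrA mu_rho mul1r.
by rewrite big_mkord -subrX1 rho_half -opprD mulrN mulr2n mulrDr mulr1.
Qed.

Lemma sigma_addchar t : sigma (w t) = w (rho * t).
Proof.
by rewrite rmorphXn sigma_zeta zeta_exprz addcharXn // -mulr_natr natr_Zp.
Qed.

Lemma it_addchar k t : it k (w t) = w (rho ^+ k * t).
Proof.
elim: k t => [|k IHk] t; first by rewrite mul1r.
by rewrite [LHS]/= -/(it k) IHk sigma_addchar mulrA -exprS.
Qed.

Definition alphaw := \prod_(0 <= j < m) (1 - w (rho ^+ j)).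
Definition beta := w mu * alphaw.

Lemma alphaE : alpha p r = alphaw.
Proof.
have bound_m : (((p - 3)./2).+1 = m)%N.
  have := predp_double; rewrite -mul2n => predp.
  have -> : (p - 3 = (m.-1).*2)%N by rewrite -mul2n; have := m_gt0; lia.
  by rewrite doubleK prednK ?m_gt0.
by rewrite /alpha bound_m; apply: eq_bigr => j _; rewrite zeta_exprz rmorphXn.
Qed.

Lemma sigma_alphaw : sigma alphaw = - w (-1) * alphaw.
Proof.
have w1_neq1 : 1 - w 1 != 0 by rewrite subr_eq0 eq_sym addchar1_neq1.
apply: (mulfI w1_neq1).
have -> : (1 - w 1) * (- w (-1) * alphaw) = alphaw * (1 - w (-1)).
  by rewrite addcharN1 //; ring.
have -> : sigma alphaw = \prod_(0 <= j < m) (1 - w (rho ^+ j.+1)).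
  by rewrite rmorph_prod; apply: eq_bigr => j _; rewrite rmorphB rmorph1 sigma_addchar -exprS.
transitivity (\prod_(0 <= j < m.+1) (1 - w (rho ^+ j))).
  by rewrite [RHS]big_ltn // big_add1 expr0.
by rewrite big_nat_recr //= rho_half.
Qed.

Lemma sigma_beta : sigma beta = - beta.
Proof.
have rho_mu : rho * mu = mu + 1.
  by transitivity (mu * (rho - 1) + mu); [ring | rewrite mu_rho addrC].
have w1N : w 1 * w (-1) = 1 by rewrite mulrC addcharN.
rewrite rmorphM sigma_addchar sigma_alphaw rho_mu addcharD // mulNr mulrN.
by rewrite -mulrA [w 1 * _]mulrA w1N mul1r.
Qed.

Lemma it_beta k : it k beta = (-1) ^+ k * beta.
Proof.
elim: k => [|k IHk]; first by rewrite mul1r.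
by rewrite [LHS]/= -/(it k) IHk rmorphM rmorph_sign sigma_beta exprS mulrN mulN1r mulNr.
Qed.

Lemma beta_sqr : beta ^+ 2 = (-1) ^+ m * p%:R.
Proof.
have := prod_1_addchar p_pr zeta_p_prim.
rewrite -(big_prim_root_nonzero rho_gen _ (fun t => 1 - w t)) card_Fp //.
rewrite predp_double big_nat_double /=.
under eq_bigr do rewrite exprD rho_half mulrN1 addcharN1 // mulrCA -expr2.
rewrite big_split /= prodrXl; under eq_bigr do rewrite -mulN1r.
rewrite big_split /= prodr_const_nat subn0.
rewrite -(big_morph _ (addcharD p_pr zeta_p_prim) (addchar0 _ _)).
rewrite sumrN sum_rho opprK -addcharXn // => <-.
by rewrite -mulrA signrMK exprMn.
Qed.

Lemma it_zz k : it k (zz p r lam) = (-1) ^+ k * beta * (1 - w (rho ^+ k)).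
Proof.
have zzE : zz p r lam = beta * (1 - w 1) by rewrite /zz alphaE zeta_exprz addchar1.
by rewrite zzE rmorphM rmorphB rmorph1 /= it_beta it_addchar mulr1.
Qed.

Lemma sign_muln j : (-1) ^+ (j * n) = (-1) ^+ j :> algC.
Proof. by rewrite -signr_odd oddM n_odd andbT signr_odd. Qed.

Definition eta N : algC := (-1) ^+ N * w (rho ^+ N).

Definition period c : algC := \sum_(0 <= j < f) eta (c + j * n).

Lemma eta_periodic N : eta (N + p.-1) = eta N.
Proof.
by rewrite /eta !exprD (prim_expr_order r_prim) predp_double -muln2 exprM sqrr_sign !mulr1.
Qed.

Lemma period_shift c l : period (c + l * n) = period c.
Proof.
have eta_per j : eta (c + (j + f) * n) = eta (c + j * n).
  by rewrite mulnDl [(f * n)%N]mulnC -predp_mul addnA eta_periodic.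
rewrite /period -(@sum_nat_periodic_shift _ (fun j => eta (c + j * n)) _ l eta_per).
by apply: eq_bigr => j _; rewrite mulnDl addnA addnAC.
Qed.

Lemma it_xx c : it c (xx n p r lam sigma) = - beta * period c.
Proof.
have it_zz_per k : it (k + p.-1) (zz p r lam) = it k (zz p r lam).
  by rewrite !it_zz !exprD (prim_expr_order r_prim) predp_double -muln2 exprM sqrr_sign !mulr1.
have it_iter j : it c (iter (j * n) sigma (zz p r lam)) = it (c + j * n) (zz p r lam).
  by rewrite /iter_rmorph iterD.
transitivity (\sum_(0 <= j < f) it (c + j * n) (zz p r lam)).
  rewrite /xx rmorph_sum big_add1 /=; under eq_bigr do rewrite it_iter.
  rewrite -(@sum_nat_periodic_shift _ (fun j => it (c + j * n) (zz p r lam)) _ 1) => [|j].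
    by apply: eq_bigr => j _; rewrite addn1.
  by rewrite mulnDl [(f * n)%N]mulnC -predp_mul addnA it_zz_per.
have it_zzE k : it k (zz p r lam) = beta * (-1) ^+ k - beta * eta k.
  by rewrite it_zz /eta; ring.
have signs : \sum_(0 <= j < f) (-1) ^+ (c + j * n) = 0 :> algC.
  under eq_bigr do rewrite exprD sign_muln.
  by rewrite -mulr_sumr f_double sumr_sign_double mulr0.
by under eq_bigr do rewrite it_zzE; rewrite sumrB -!mulr_sumr signs mulr0 sub0r mulNr.
Qed.

Lemma eta_corr u v : \sum_(0 <= N < p.-1) eta (u + N) * eta (v + N)
  = (-1) ^+ (u + v) * ((rho ^+ u + rho ^+ v == 0)%:R * p%:R - 1).
Proof.
set s := rho ^+ u + rho ^+ v.
have termE N : eta (u + N) * eta (v + N) = (-1) ^+ (u + v) * w (s * rho ^+ N).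
  rewrite /eta !exprD mulrDl addcharD //.
  transitivity ((-1) ^+ u * (-1) ^+ v * ((-1) ^+ N) ^+ 2 *
                (w (rho ^+ u * rho ^+ N) * w (rho ^+ v * rho ^+ N))); first by ring.
  by rewrite sqrr_sign mulr1.
have := big_prim_root_nonzero rho_gen +%R (fun t => w (s * t)); rewrite card_Fp // => sumE.
by under eq_bigr do rewrite termE; rewrite -mulr_sumr sumE sum_addchar_nonzero.
Qed.

Lemma period_corr a b : \sum_(0 <= k < n) period (a + k) * period (b + k)
  = \sum_(0 <= l < f) \sum_(0 <= N < p.-1) eta (a + N) * eta (b + l * n + N).
Proof.
transitivity (\sum_(0 <= k < n) \sum_(0 <= j < f)
                eta (a + (k + j * n)) * period (b + (k + j * n))).
  apply: eq_bigr => k _; rewrite mulr_suml; apply: eq_bigr => j _.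
  by rewrite !addnA period_shift.
rewrite -(sum_nat_mul_blocks (fun N => eta (a + N) * period (b + N))) -predp_mul.
rewrite exchange_big /=; apply: eq_bigr => N _; rewrite mulr_sumr.
by apply: eq_bigr => l _; rewrite addnAC.
Qed.

Lemma rho_add_eq0 a b l : (a < n)%N -> (b < n)%N -> (l < f)%N ->
  (rho ^+ a + rho ^+ (b + l * n) == 0) = (a == b) && (l == h).
Proof.
move=> a_lt_n b_lt_n l_lt_f.
have oppE : - rho ^+ (b + l * n) = rho ^+ (b + (l + h) * n).
  by rewrite mulnDl addnA [RHS]exprD [(h * n)%N]mulnC rho_half mulrN1.
rewrite addr_eq0 oppE (eq_prim_root_expr r_prim) predp_double doubleMr (mulnC n).
by apply: eqn_mod_add_muln; rewrite -?f_double.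
Qed.

Lemma period_orthogonal a b : (a < n)%N -> (b < n)%N ->
  \sum_(0 <= k < n) period (a + k) * period (b + k) = (a == b)%:R * ((-1) ^+ m * p%:R).
Proof.
move=> a_lt_n b_lt_n; rewrite period_corr.
under eq_bigr => l _ do rewrite eta_corr addnA exprD sign_muln mulrBr mulr1.
have alt : \sum_(0 <= l < f) (-1) ^+ l = 0 :> algC by rewrite f_double sumr_sign_double.
rewrite sumrB -mulr_sumr alt mulr0 subr0 big_mkord.
have [<-|a_neq_b] := eqVneq a b; last first.
  by rewrite big1 ?mul0r // => l _; rewrite rho_add_eq0 // (negbTE a_neq_b) mul0r mulr0.
have h_lt_f : (h < f)%N.
  have := m_gt0; rewrite muln_gt0 => /andP[_ h_gt0].
  by rewrite {2}f_double -addnn -{1}[h]add0n ltn_add2r.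
rewrite (bigD1 (Ordinal h_lt_f)) //= rho_add_eq0 // !eqxx mul1r big1 ?addr0 => [|l l_neq_h].
  by rewrite addnn -muln2 exprM sqrr_sign !mul1r mulnC sign_muln.
by rewrite rho_add_eq0 // eqxx (negbTE (l_neq_h : (l : nat) != h)) mul0r mulr0.
Qed.

Lemma Gmat_entry i j : Gmat n p r lam sigma i j = - beta * period (i + j) / p%:R.
Proof. by rewrite mxE; congr (_ / _); apply: it_xx. Qed.

Lemma Gmat_mul_tr : Gmat n p r lam sigma *m (Gmat n p r lam sigma)^T = 1%:M.
Proof.
have p_neq0 : p%:R != 0 :> algC by rewrite pnatr_eq0 -lt0n prime_gt0.
apply/matrixP => i j; rewrite [LHS]mxE [RHS]mxE.
transitivity (beta ^+ 2 / p%:R ^+ 2 * \sum_(0 <= k < n) period (i + k) * period (j + k)).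
  rewrite big_mkord mulr_sumr; apply: eq_bigr => k _.
  by rewrite [_^T _ _]mxE !Gmat_entry -exprVn; ring.
have sign_sqr : ((-1) ^+ m * p%:R) ^+ 2 = p%:R ^+ 2 :> algC by rewrite exprMn sqrr_sign mul1r.
rewrite period_orthogonal // beta_sqr.
transitivity ((i == j)%:R * (((-1) ^+ m * p%:R) ^+ 2 / p%:R ^+ 2) : algC); first by ring.
by rewrite sign_sqr mulfV ?mulr1 // expf_neq0.
Qed.

End GaussPeriodMatrix.

Theorem theorem1 (n p : nat) (r lam : int) (sigma : {rmorphism algC -> algC}) :
  (1 < n)%N -> odd n -> prime p -> (p = 1 %[mod n])%N ->
  (p.-1).-primitive_root (r%:~R : 'F_p) ->
  (lam * (r - 1) = 1 %[mod p])%Z ->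
  sigma (zeta p) = zeta p ^ r ->
  let G := Gmat n p r lam sigma in
  G *m G^T = 1%:M /\ G^T *m G = 1%:M.
Proof.
move=> n_gt1 n_odd p_pr p_mod_n r_prim lam_r sigma_zeta G.
have G_sym : G^T = G by apply/matrixP => i j; rewrite !mxE addnC.
have := Gmat_mul_tr n_gt1 n_odd p_pr p_mod_n r_prim lam_r sigma_zeta.
by rewrite -/G G_sym.
Qed.
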